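(* Let $n\ge 2$ and $x_0\in\mathbb{R}$. Then $$\psi(x_0+iy)=A\,|y|\,(1+o(1)),\qquad y\to 0,\ y\neq 0,$$ where $$A=\int_{\widetilde D_{x_0}}\left|\sum_{k=1}^{n-1}k(k+1)t_kx_0^{k-1}\right|^2dt_1\dots dt_{n-1},$$ and $\widetilde D_{x_0}$ is the set of $(t_1,\dots,t_{n-1})\in\mathbb{R}^{n-1}$ with $\max_{1\le k\le n-1}|t_k|\le1$, $\left|\sum_{k=1}^{n-1}kt_kx_0^{k+1}\right|\le1$ and $\left|\sum_{k=1}^{n-1}(k+1)t_kx_0^{k}\right|\le1$.
   Context: For $z\in\mathbb{C}\setminus\mathbb{R}$, let $D_z$ be the set of $(t_1,\dots,t_{n-1})\in\mathbb{R}^{n-1}$ with $\max_{1\le k\le n-1}|t_k|\le 1$, $\left|z\sum_{k=1}^{n-1}t_k\left(z^k-\frac{\Im z^{k+1}}{\Im z}\right)\right|\le 1$ and $\left|\frac{1}{\Im z}\sum_{k=1}^{n-1}t_k\Im z^{k+1}\right|\le 1$, and define $$\psi(z)=\frac{1}{|\Im z|}\int_{D_z}\left|\sum_{k=1}^{n-1}t_k\left((k+1)z^{k}-\frac{\Im z^{k+1}}{\Im z}\right)\right|^2dt_1\dots dt_{n-1}.$$ *)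

From Stdlib Require Import Reals Lra Lia ClassicalEpsilon.
Open Scope R_scope.

Definition C := (R * R)%type.
Definition cadd (z w : C) : C := (fst z + fst w, snd z + snd w).
Definition csub (z w : C) : C := (fst z - fst w, snd z - snd w).
Definition cmul (z w : C) : C :=
  (fst z * fst w - snd z * snd w, fst z * snd w + snd z * fst w).
Definition cscal (a : R) (z : C) : C := (a * fst z, a * snd z).
Definition cofR (a : R) : C := (a, 0).
Definition cnorm (z : C) : R := sqrt (fst z ^ 2 + snd z ^ 2).
Definition Im (z : C) : R := snd z.
Fixpoint cpow (z : C) (k : nat) : C :=
  match k with O => (1, 0) | S k' => cmul z (cpow z k') end.

Fixpoint sumR1 (m : nat) (g : nat -> R) : R :=
  match m with O => 0 | S m' => sumR1 m' g + g (S m') end.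
Fixpoint sumC1 (m : nat) (g : nat -> C) : C :=
  match m with O => (0, 0) | S m' => cadd (sumC1 m' g) (g (S m')) end.
Fixpoint sumN (N : nat) (g : nat -> R) : R :=
  match N with O => 0 | S N' => sumN N' g + g N' end.

Definition rle (a b : R) : bool := if Rle_dec a b then true else false.

Fixpoint box_ok (m : nat) (t : nat -> R) : bool :=
  match m with O => true | S m' => andb (box_ok m' t) (rle (Rabs (t (S m'))) 1) end.

(* ---------- Riemann integral over [-1,1]^m (coordinates t 1, ..., t m) ----------
   Defined as the limit of midpoint Riemann sums on the uniform grid with
   N subdivisions per axis (for Riemann-integrable integrands this equals the
   Lebesgue integral). *)
Definition upd (t : nat -> R) (k : nat) (v : R) : nat -> R :=
  fun i => if Nat.eqb i k then v else t i.
Definition gpt (N j : nat) : R := -1 + (INR j + /2) * (2 / INR N).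
Fixpoint gsum (m N : nat) (f : (nat -> R) -> R) : R :=
  match m with
  | O => f (fun _ => 0)
  | S m' => sumN N (fun j => gsum m' N (fun t => f (upd t (S m') (gpt N j))))
  end.
Definition riemann_sum (m N : nat) (f : (nat -> R) -> R) : R :=
  (2 / INR N) ^ m * gsum m N f.
Definition box_integral (m : nat) (f : (nat -> R) -> R) : R :=
  epsilon (inhabits 0) (fun I => Un_cv (fun N => riemann_sum m (S N) f) I).

Definition Dz_ok (n : nat) (z : C) (t : nat -> R) : bool :=
  let m := (n - 1)%nat in
  andb (box_ok m t)
  (andb (rle (cnorm (cmul z (sumC1 m (fun k =>
            cscal (t k) (csub (cpow z k) (cofR (Im (cpow z (S k)) / Im z))))))) 1)
        (rle (Rabs (/ Im z * sumR1 m (fun k => t k * Im (cpow z (S k))))) 1)).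

Definition psi_integrand (n : nat) (z : C) (t : nat -> R) : R :=
  let m := (n - 1)%nat in
  cnorm (sumC1 m (fun k =>
     cscal (t k) (csub (cscal (INR (S k)) (cpow z k))
                       (cofR (Im (cpow z (S k)) / Im z))))) ^ 2.

Definition psi (n : nat) (x y : R) : R :=
  let z : C := (x, y) in
  / Rabs (Im z) *
  box_integral (n - 1) (fun t => if Dz_ok n z t then psi_integrand n z t else 0).

Definition Dtilde_ok (n : nat) (x0 : R) (t : nat -> R) : bool :=
  let m := (n - 1)%nat in
  andb (box_ok m t)
  (andb (rle (Rabs (sumR1 m (fun k => INR k * t k * x0 ^ (S k)))) 1)
        (rle (Rabs (sumR1 m (fun k => INR (S k) * t k * x0 ^ k))) 1)).

Definition A_const (n : nat) (x0 : R) : R :=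
  box_integral (n - 1) (fun t =>
    if Dtilde_ok n x0 t
    then (Rabs (sumR1 (n - 1) (fun k => INR k * INR (S k) * t k * x0 ^ (k - 1)))) ^ 2
    else 0).

(* Expanding z^k = R_k + i y J_k with R_k, J_k polynomial in y, the
   constraints defining D_z become |<c1(y), t>| <= 1 and |<c2(y), t>| <= 1 and the integrand
   of psi becomes y^2 (<p1(y), t>^2 + <p2(y), t>^2), for coefficient vectors depending
   continuously on y; at y = 0 these are exactly the data defining A.  Hence
   psi(x0 + i y) = |y| I(y), where I(y) integrates the truncated quadratic form over the cube,
   and it remains to show that I is continuous at 0 and that I(0) = A > 0.
   Both the Riemann integrability of the truncated forms and their continuity in the
   coefficients come from one estimate: the grid points lying in the slab
   ||<c, t>| - 1| <= d have Riemann measure O(d + 1/N) as soon as c_1 <> 0 (and the slab is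
   empty when sum |c_k| < 1).  Positivity of A holds because the integrand at y = 0 is bounded
   below on a small box around (rho, 0, ..., 0). *)

From Stdlib Require Import Reals Lra Lia ClassicalEpsilon FunctionalExtensionality.
Open Scope bool_scope.
Open Scope R_scope.

Definition ind (b : bool) : R := if b then 1 else 0.

Lemma ind_bounds b : 0 <= ind b <= 1.
Proof. destruct b; simpl; lra. Qed.

Lemma rle_true a b : rle a b = true <-> a <= b.
Proof. unfold rle; destruct (Rle_dec a b); split; intros; auto; try discriminate; lra. Qed.

Lemma rle_false a b : rle a b = false <-> b < a.
Proof. unfold rle; destruct (Rle_dec a b); split; intros; auto; try discriminate; lra. Qed.

Lemma Rabs_le_bounds x a : Rabs x <= a -> -a <= x <= a.
Proof. intros H. pose proof (Rle_abs x). pose proof (Rle_abs (-x)). rewrite Rabs_Ropp in H1. lra. Qed.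

Lemma INR_pos N : (1 <= N)%nat -> 0 < INR N.
Proof. intros; apply lt_0_INR; lia. Qed.

Lemma inv_INR_pos N : (1 <= N)%nat -> 0 < / INR N.
Proof. intros; apply Rinv_0_lt_compat, INR_pos; auto. Qed.

Lemma Rdiv_le_compat_r a b c : 0 < c -> a <= b -> a / c <= b / c.
Proof. intros; unfold Rdiv; apply Rmult_le_compat_r; auto. left; apply Rinv_0_lt_compat; auto. Qed.

Lemma sumN_ext N f g : (forall j, (j < N)%nat -> f j = g j) -> sumN N f = sumN N g.
Proof. induction N; simpl; intros H; auto. rewrite IHN by (intros; apply H; lia). rewrite H by lia; auto. Qed.

Lemma sumN_le N f g : (forall j, (j < N)%nat -> f j <= g j) -> sumN N f <= sumN N g.
Proof.
  induction N; simpl; intros H; [lra|].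
  assert (sumN N f <= sumN N g) by (apply IHN; intros; apply H; lia).
  assert (f N <= g N) by (apply H; lia). lra.
Qed.

Lemma sumN_plus N f g : sumN N (fun j => f j + g j) = sumN N f + sumN N g.
Proof. induction N; simpl; [ring|]. rewrite IHN; ring. Qed.

Lemma sumN_minus N f g : sumN N (fun j => f j - g j) = sumN N f - sumN N g.
Proof. induction N; simpl; [ring|]. rewrite IHN; ring. Qed.

Lemma sumN_scal N c f : sumN N (fun j => c * f j) = c * sumN N f.
Proof. induction N; simpl; [ring|]. rewrite IHN; ring. Qed.

Lemma sumN_const N c : sumN N (fun _ => c) = INR N * c.
Proof. induction N; simpl sumN; [simpl; ring|]. rewrite IHN, S_INR; ring. Qed.

Lemma sumN_abs N f : Rabs (sumN N f) <= sumN N (fun j => Rabs (f j)).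
Proof. induction N; simpl; [rewrite Rabs_R0; lra|]. eapply Rle_trans; [apply Rabs_triang|]. lra. Qed.

Lemma sumN_add a b f : sumN (a + b) f = sumN a f + sumN b (fun i => f (a + i)%nat).
Proof. induction b; simpl. rewrite Nat.add_0_r; ring. rewrite Nat.add_succ_r; simpl; rewrite IHb; ring. Qed.

Lemma sumN_mul N M f : sumN (N * M) f = sumN N (fun j => sumN M (fun i => f (j * M + i)%nat)).
Proof. induction N; simpl; auto. rewrite Nat.add_comm, sumN_add, IHN. f_equal. Qed.

Lemma sumN_ind_nonneg K g : 0 <= sumN K (fun j => ind (g j)).
Proof. induction K; simpl; [lra|]. pose proof (ind_bounds (g K)); lra. Qed.

Lemma sumR1_ext m f g : (forall k, (1 <= k <= m)%nat -> f k = g k) -> sumR1 m f = sumR1 m g.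
Proof. induction m; simpl; intros H; auto. rewrite IHm by (intros; apply H; lia). rewrite H by lia; auto. Qed.

Lemma sumR1_le m f g : (forall k, (1 <= k <= m)%nat -> f k <= g k) -> sumR1 m f <= sumR1 m g.
Proof.
  induction m; simpl; intros H; [lra|].
  assert (sumR1 m f <= sumR1 m g) by (apply IHm; intros; apply H; lia).
  assert (f (S m) <= g (S m)) by (apply H; lia). lra.
Qed.

Lemma sumR1_plus m f g : sumR1 m (fun j => f j + g j) = sumR1 m f + sumR1 m g.
Proof. induction m; simpl; [ring|]. rewrite IHm; ring. Qed.

Lemma sumR1_minus m f g : sumR1 m (fun j => f j - g j) = sumR1 m f - sumR1 m g.
Proof. induction m; simpl; [ring|]. rewrite IHm; ring. Qed.

Lemma sumR1_scal m c f : sumR1 m (fun j => c * f j) = c * sumR1 m f.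
Proof. induction m; simpl; [ring|]. rewrite IHm; ring. Qed.

Lemma sumR1_zero m : sumR1 m (fun _ => 0) = 0.
Proof. induction m; simpl; auto. rewrite IHm; ring. Qed.

Lemma sumR1_eq0 m f : (forall k, (1 <= k <= m)%nat -> f k = 0) -> sumR1 m f = 0.
Proof. intros H. rewrite (sumR1_ext m f (fun _ => 0)) by auto. apply sumR1_zero. Qed.

Lemma sumR1_abs m f : Rabs (sumR1 m f) <= sumR1 m (fun j => Rabs (f j)).
Proof. induction m; simpl; [rewrite Rabs_R0; lra|]. eapply Rle_trans; [apply Rabs_triang|]. lra. Qed.

Lemma sumR1_nonneg m f : (forall k, (1 <= k <= m)%nat -> 0 <= f k) -> 0 <= sumR1 m f.
Proof. intros H. rewrite <- (sumR1_zero m). apply sumR1_le; auto. Qed.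

Lemma gpt_S N K : gpt N (S K) = gpt N K + 2 / INR N.
Proof. unfold gpt; rewrite S_INR; ring. Qed.

Lemma gpt_0 N : (1 <= N)%nat -> gpt N 0 = -1 + / INR N.
Proof. intros; unfold gpt; simpl INR; assert (0 < INR N) by (apply INR_pos; auto); field; lra. Qed.

Lemma gpt_N N : (1 <= N)%nat -> gpt N N = 1 + / INR N.
Proof. intros; unfold gpt; assert (0 < INR N) by (apply INR_pos; auto); field; lra. Qed.

Lemma gpt_bound N j : (j < N)%nat -> Rabs (gpt N j) <= 1 - / INR N.
Proof.
  intros H. assert (Hn : 0 < INR N) by (apply INR_pos; lia).
  assert (Hj : INR j + 1 <= INR N) by (rewrite <- S_INR; apply le_INR; lia).
  assert (Hj0 : 0 <= INR j) by apply pos_INR.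
  assert (E : gpt N j = -1 + (2 * INR j + 1) / INR N) by (unfold gpt; field; lra).
  rewrite E. apply Rabs_le. split.
  - assert (1 / INR N <= (2 * INR j + 1) / INR N) by (apply Rdiv_le_compat_r; lra).
    unfold Rdiv in *; lra.
  - assert ((2 * INR j + 1) / INR N <= (2 * INR N - 1) / INR N) by (apply Rdiv_le_compat_r; lra).
    assert ((2 * INR N - 1) / INR N = 2 - / INR N) by (field; lra). lra.
Qed.

(* The (j M + i)-th point of the grid with N M cells lies in the j-th cell of the grid with N
   cells, whose midpoint is gpt N j. *)
Lemma gpt_refine N M j i : (j < N)%nat -> (i < M)%nat ->
  Rabs (gpt (N * M) (j * M + i) - gpt N j) <= / INR N.
Proof.
  intros Hj Hi. assert (Hn : 0 < INR N) by (apply INR_pos; lia).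
  assert (Hm : 0 < INR M) by (apply INR_pos; lia).
  assert (Hi' : INR i + 1 <= INR M) by (rewrite <- S_INR; apply le_INR; lia).
  assert (Hi0 : 0 <= INR i) by apply pos_INR.
  assert (E : gpt (N * M) (j * M + i) - gpt N j = (2 * INR i + 1 - INR M) / (INR N * INR M)).
  { unfold gpt. rewrite plus_INR, !mult_INR. field; lra. }
  rewrite E. unfold Rdiv. rewrite Rabs_mult, (Rabs_right (/ _)) by (left; apply Rinv_0_lt_compat; nra).
  assert (Rabs (2 * INR i + 1 - INR M) <= INR M) by (apply Rabs_le; lra).
  apply Rle_trans with (INR M * / (INR N * INR M)).
  - apply Rmult_le_compat_r; auto. left; apply Rinv_0_lt_compat; nra.
  - right; field; lra.
Qed.

Lemma upd_eq t k v : upd t k v k = v.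
Proof. unfold upd; rewrite Nat.eqb_refl; auto. Qed.

Lemma upd_neq t k v i : i <> k -> upd t k v i = t i.
Proof. intros; unfold upd; destruct (Nat.eqb_spec i k); auto; lia. Qed.

Lemma upd_comm t i k a b : i <> k -> upd (upd t i a) k b = upd (upd t k b) i a.
Proof.
  intros H; apply functional_extensionality; intros x; unfold upd.
  destruct (Nat.eqb_spec x k), (Nat.eqb_spec x i); auto; lia.
Qed.

Lemma upd_same t k : upd t k (t k) = t.
Proof. apply functional_extensionality; intros x; unfold upd; destruct (Nat.eqb_spec x k); subst; auto. Qed.

Definition in_shrunk_cube (N m : nat) (t : nat -> R) : Prop :=
  forall k, (1 <= k <= m)%nat -> Rabs (t k) <= 1 - / INR N.

Definition grid_near (N m : nat) (t s : nat -> R) : Prop :=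
  (forall k, (1 <= k <= m)%nat -> Rabs (s k - t k) <= / INR N) /\
  (forall k, ~ (1 <= k <= m)%nat -> s k = t k).

Lemma in_shrunk_cube_upd N m t j : in_shrunk_cube N m t -> (j < N)%nat ->
  in_shrunk_cube N (S m) (upd t (S m) (gpt N j)).
Proof.
  intros H Hj k Hk. destruct (Nat.eq_dec k (S m)).
  - subst; rewrite upd_eq; apply gpt_bound; auto.
  - rewrite upd_neq by auto; apply H; lia.
Qed.

Lemma in_shrunk_cube_le1 N m t : (1 <= N)%nat -> in_shrunk_cube N m t ->
  forall k, (1 <= k <= m)%nat -> Rabs (t k) <= 1.
Proof. intros HN H k Hk. specialize (H k Hk). pose proof (inv_INR_pos N HN); lra. Qed.

Lemma grid_near_upd N m t s a b : grid_near N m t s -> Rabs (b - a) <= / INR N ->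
  grid_near N (S m) (upd t (S m) a) (upd s (S m) b).
Proof.
  intros [H1 H2] Hab; split.
  - intros k Hk. destruct (Nat.eq_dec k (S m)).
    + subst; rewrite !upd_eq; auto.
    + rewrite !upd_neq by auto; apply H1; lia.
  - intros k Hk. rewrite !upd_neq by lia. apply H2; lia.
Qed.

Lemma grid_near_refl N m t : (1 <= N)%nat -> grid_near N m t t.
Proof.
  intros HN; split; intros; auto. unfold Rminus; rewrite Rplus_opp_r, Rabs_R0.
  left; apply inv_INR_pos; auto.
Qed.

Lemma gsum_le m : forall N f g, (forall t, in_shrunk_cube N m t -> f t <= g t) -> gsum m N f <= gsum m N g.
Proof.
  induction m; intros N f g H; simpl.
  - apply H. intros k Hk; lia.
  - apply sumN_le; intros j Hj. apply IHm. intros t Ht. apply H. apply in_shrunk_cube_upd; auto.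
Qed.

Lemma gsum_plus m : forall N f g, gsum m N (fun t => f t + g t) = gsum m N f + gsum m N g.
Proof. induction m; intros; simpl; auto. rewrite <- sumN_plus. apply sumN_ext; intros; apply IHm. Qed.

Lemma gsum_scal m : forall N c f, gsum m N (fun t => c * f t) = c * gsum m N f.
Proof. induction m; intros; simpl; auto. rewrite <- sumN_scal. apply sumN_ext; intros; apply IHm. Qed.

Lemma gsum_const m N c : gsum m N (fun _ => c) = INR N ^ m * c.
Proof. induction m; simpl; [ring|]. rewrite sumN_const, IHm; ring. Qed.

Lemma riemann_sum_le m N f g : (1 <= N)%nat -> (forall t, in_shrunk_cube N m t -> f t <= g t) ->
  riemann_sum m N f <= riemann_sum m N g.
Proof.
  intros HN H. unfold riemann_sum. apply Rmult_le_compat_l.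
  - apply pow_le. pose proof (inv_INR_pos N HN). unfold Rdiv; lra.
  - apply gsum_le; auto.
Qed.

Lemma riemann_sum_plus m N f g :
  riemann_sum m N (fun t => f t + g t) = riemann_sum m N f + riemann_sum m N g.
Proof. unfold riemann_sum; rewrite gsum_plus; ring. Qed.

Lemma riemann_sum_scal m N c f : riemann_sum m N (fun t => c * f t) = c * riemann_sum m N f.
Proof. unfold riemann_sum; rewrite gsum_scal; ring. Qed.

Lemma riemann_sum_const m N c : (1 <= N)%nat -> riemann_sum m N (fun _ => c) = 2 ^ m * c.
Proof.
  intros HN; unfold riemann_sum; rewrite gsum_const.
  rewrite <- Rmult_assoc, <- Rpow_mult_distr. assert (0 < INR N) by (apply INR_pos; auto).
  replace (2 / INR N * INR N) with 2 by (field; lra). auto.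
Qed.

Lemma riemann_sum_minus m N f g :
  riemann_sum m N (fun t => f t - g t) = riemann_sum m N f - riemann_sum m N g.
Proof.
  replace (fun t => f t - g t) with (fun t => f t + (-1) * g t)
    by (apply functional_extensionality; intros; ring).
  rewrite riemann_sum_plus, riemann_sum_scal; ring.
Qed.

Lemma riemann_sum_nonneg m N f : (1 <= N)%nat -> (forall t, in_shrunk_cube N m t -> 0 <= f t) ->
  0 <= riemann_sum m N f.
Proof.
  intros HN H. replace 0 with (riemann_sum m N (fun _ => 0)) by (rewrite riemann_sum_const; auto; ring).
  apply riemann_sum_le; auto.
Qed.

Lemma riemann_sum_abs_diff m N f g : (1 <= N)%nat ->
  Rabs (riemann_sum m N f - riemann_sum m N g) <= riemann_sum m N (fun t => Rabs (f t - g t)).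
Proof.
  intros HN. rewrite <- riemann_sum_minus. apply Rabs_le. split.
  - rewrite <- (Rmult_1_l (riemann_sum _ _ _)), Ropp_mult_distr_l, <- riemann_sum_scal.
    apply riemann_sum_le; auto; intros.
    pose proof (Rle_abs (-(f t - g t))) as H1. rewrite Rabs_Ropp in H1. lra.
  - apply riemann_sum_le; auto; intros; apply Rle_abs.
Qed.

Lemma riemann_sum_S m N f : riemann_sum (S m) N f =
  2 / INR N * sumN N (fun j => riemann_sum m N (fun t => f (upd t (S m) (gpt N j)))).
Proof. unfold riemann_sum; simpl gsum. rewrite sumN_scal. simpl pow. ring. Qed.

Lemma sumN_refine_diff_le h N M X Y B : 0 <= h -> (1 <= M)%nat ->
  (forall j i, (j < N)%nat -> (i < M)%nat -> Rabs (X j - Y j i) <= B j) ->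
  Rabs (h * sumN N X - h / INR M * sumN N (fun j => sumN M (Y j))) <= h * sumN N B.
Proof.
  intros Hh HM H. assert (Hm : 0 < INR M) by (apply INR_pos; auto).
  assert (E : h * sumN N X - h / INR M * sumN N (fun j => sumN M (Y j)) =
              h * sumN N (fun j => / INR M * sumN M (fun i => X j - Y j i))).
  { rewrite (sumN_ext N (fun j => / INR M * sumN M (fun i => X j - Y j i))
               (fun j => X j - / INR M * sumN M (Y j))).
    - rewrite sumN_minus, sumN_scal. unfold Rdiv; ring.
    - intros j Hj. rewrite sumN_minus, sumN_const. field; lra. }
  rewrite E, Rabs_mult, (Rabs_right h) by lra. apply Rmult_le_compat_l; auto.
  eapply Rle_trans; [apply sumN_abs|]. apply sumN_le; intros j Hj.
  rewrite Rabs_mult, Rabs_right by (left; apply Rinv_0_lt_compat; auto).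
  apply Rle_trans with (/ INR M * sumN M (fun _ => B j)).
  - apply Rmult_le_compat_l; [left; apply Rinv_0_lt_compat; auto|].
    eapply Rle_trans; [apply sumN_abs|]. apply sumN_le; intros; auto.
  - rewrite sumN_const. right; field; lra.
Qed.

Lemma oscillation_bound_nonneg N m f w : (1 <= N)%nat ->
  (forall t s, in_shrunk_cube N m t -> grid_near N m t s -> Rabs (f s - f t) <= w t) ->
  forall t, in_shrunk_cube N m t -> 0 <= w t.
Proof.
  intros HN H t Ht. specialize (H t t Ht (grid_near_refl N m t HN)).
  unfold Rminus in H; rewrite Rplus_opp_r, Rabs_R0 in H; auto.
Qed.

(* Refining the grid changes the Riemann sum by at most the Riemann sum of a local oscillation
   bound w; the factor 3 per dimension comes from comparing through an intermediate point. *)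
Lemma riemann_sum_refine m : forall f w N M, (1 <= N)%nat -> (1 <= M)%nat ->
  (forall t s, in_shrunk_cube N m t -> grid_near N m t s -> Rabs (f s - f t) <= w t) ->
  Rabs (riemann_sum m N f - riemann_sum m (N * M) f) <= 3 ^ m * riemann_sum m N w.
Proof.
  induction m; intros f w N M HN HM H.
  - unfold riemann_sum; simpl. unfold Rminus; rewrite Rplus_opp_r, Rabs_R0.
    rewrite !Rmult_1_l. apply (oscillation_bound_nonneg N 0 f w HN H); intros k Hk; lia.
  - assert (Hh : 0 <= 2 / INR N) by (pose proof (inv_INR_pos N HN); unfold Rdiv; lra).
    rewrite !riemann_sum_S, sumN_mul, mult_INR.
    replace (2 / (INR N * INR M)) with (2 / INR N / INR M)
      by (field; split; apply not_0_INR; lia).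
    apply Rle_trans with
      (2 / INR N * sumN N (fun j => 3 ^ S m * riemann_sum m N (fun t => w (upd t (S m) (gpt N j)))));
      [|rewrite sumN_scal; right; ring].
    apply sumN_refine_diff_le; auto. intros j i Hj Hi.
    set (fj := fun t => f (upd t (S m) (gpt N j))).
    set (fji := fun t => f (upd t (S m) (gpt (N * M) (j * M + i)))).
    set (W := riemann_sum m N (fun t => w (upd t (S m) (gpt N j)))).
    assert (HW : 0 <= W).
    { apply riemann_sum_nonneg; auto; intros t Ht.
      apply (oscillation_bound_nonneg N (S m) f w HN H), in_shrunk_cube_upd; auto. }
    assert (A1 : Rabs (riemann_sum m N fj - riemann_sum m N fji) <= W).
    { eapply Rle_trans. apply riemann_sum_abs_diff; auto. apply riemann_sum_le; auto. intros t Ht.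
      unfold fj, fji. rewrite Rabs_minus_sym. apply H. apply in_shrunk_cube_upd; auto.
      apply grid_near_upd. apply grid_near_refl; auto. apply gpt_refine; auto. }
    assert (A2 : Rabs (riemann_sum m N fji - riemann_sum m (N * M) fji) <= 3 ^ m * (2 * W)).
    { unfold W; rewrite <- riemann_sum_scal. apply IHm; auto. intros t s Ht Hs. unfold fji.
      assert (T := in_shrunk_cube_upd N m t j Ht Hj).
      pose proof (H _ _ T (grid_near_upd N m t s _ _ Hs (gpt_refine N M j i Hj Hi))) as B1.
      pose proof (H _ _ T (grid_near_upd N m t t _ _ (grid_near_refl N m t HN)
                             (gpt_refine N M j i Hj Hi))) as B2.
      set (u := gpt (N * M) (j * M + i)) in *.
      replace (f (upd s (S m) u) - f (upd t (S m) u)) with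
        ((f (upd s (S m) u) - f (upd t (S m) (gpt N j))) -
         (f (upd t (S m) u) - f (upd t (S m) (gpt N j)))) by ring.
      eapply Rle_trans. apply Rabs_triang. rewrite Rabs_Ropp. lra. }
    fold fj fji W. assert (1 <= 3 ^ m) by (apply pow_R1_Rle; lra).
    replace (riemann_sum m N fj - riemann_sum m (N * M) fji) with
      ((riemann_sum m N fj - riemann_sum m N fji) + (riemann_sum m N fji - riemann_sum m (N * M) fji))
      by ring.
    eapply Rle_trans. apply Rabs_triang. simpl. nra.
Qed.

Lemma div_INR_S_small C eps : 0 <= C -> 0 < eps ->
  exists N0, forall N, (N0 <= N)%nat -> C / INR (S N) < eps.
Proof.
  intros HC He. destruct (INR_unbounded (C / eps)) as [N0 HN0]. exists N0. intros N HN.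
  assert (HS : INR N0 + 1 <= INR (S N)) by (rewrite <- S_INR; apply le_INR; lia).
  assert (Hp : 0 < INR (S N)) by (apply INR_pos; lia).
  apply Rmult_lt_reg_r with (INR (S N)); auto. replace (C / INR (S N) * INR (S N)) with C by (field; lra).
  assert (C / eps * eps = C) by (field; lra). nra.
Qed.

Lemma Un_cv_diff_le u v a b E C : Un_cv u a -> Un_cv v b -> 0 <= C ->
  (exists N0, forall N, (N0 <= N)%nat -> Rabs (u N - v N) <= E + C / INR (S N)) ->
  Rabs (a - b) <= E.
Proof.
  intros Hu Hv HC [N0 H]. destruct (Rle_or_lt (Rabs (a - b)) E) as [|Hlt]; auto. exfalso.
  set (g := Rabs (a - b) - E). assert (Hg : 0 < g / 3) by (unfold g; lra).
  destruct (Hu _ Hg) as [N1 H1]. destruct (Hv _ Hg) as [N2 H2].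
  destruct (div_INR_S_small C (g / 3) HC Hg) as [N3 H3].
  set (N := (N0 + N1 + N2 + N3)%nat).
  specialize (H N ltac:(unfold N; lia)). specialize (H1 N ltac:(unfold N; lia)).
  specialize (H2 N ltac:(unfold N; lia)). specialize (H3 N ltac:(unfold N; lia)).
  unfold Rdist in H1, H2.
  assert (Rabs (a - b) <= Rabs (u N - a) + Rabs (u N - v N) + Rabs (v N - b)).
  { replace (a - b) with (-(u N - a) + (u N - v N) + (v N - b)) by ring.
    eapply Rle_trans. apply Rabs_triang. rewrite (Rplus_comm _ (Rabs _)).
    pose proof (Rabs_triang (-(u N - a)) (u N - v N)). rewrite Rabs_Ropp in H0. lra. }
  unfold g in *. lra.
Qed.

Lemma Un_cv_ge u a L : Un_cv u a -> (exists N0, forall N, (N0 <= N)%nat -> L <= u N) -> L <= a.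
Proof.
  intros Hu [N0 H]. destruct (Rle_or_lt L a) as [|Hlt]; auto. exfalso.
  destruct (Hu (L - a) ltac:(lra)) as [N1 H1].
  specialize (H (N0 + N1)%nat ltac:(lia)). specialize (H1 (N0 + N1)%nat ltac:(lia)).
  unfold Rdist in H1. apply Rabs_def2 in H1. lra.
Qed.

Lemma Un_cv_scal u l c : Un_cv u l -> Un_cv (fun N => c * u N) (c * l).
Proof.
  apply CV_mult. intros e He. exists O; intros. unfold Rdist.
  unfold Rminus; rewrite Rplus_opp_r, Rabs_R0; auto.
Qed.

Lemma box_integral_unique m f l : Un_cv (fun N => riemann_sum m (S N) f) l -> box_integral m f = l.
Proof.
  intros H. unfold box_integral.
  apply UL_sequence with (fun N => riemann_sum m (S N) f); auto.
  apply epsilon_spec. exists l; auto.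
Qed.

Lemma box_integral_cauchy m f :
  (forall eta, 0 < eta -> exists N0, forall N M, (N0 <= N)%nat -> (N0 <= M)%nat ->
     Rabs (riemann_sum m (S N) f - riemann_sum m (S M) f) <= eta) ->
  Un_cv (fun N => riemann_sum m (S N) f) (box_integral m f).
Proof.
  intros H. assert (Hc : Cauchy_crit (fun N => riemann_sum m (S N) f)).
  { intros eps He. destruct (H (eps / 2) ltac:(lra)) as [N0 HN0]. exists N0. intros n k Hn Hk.
    unfold Rdist. specialize (HN0 n k Hn Hk). lra. }
  destruct (R_complete _ Hc) as [l Hl].
  rewrite (box_integral_unique m f l Hl); auto.
Qed.

Lemma grid_count_upper_aux N a w : (1 <= N)%nat -> 0 <= w -> forall K,
  2 / INR N * sumN K (fun j => ind (rle a (gpt N j) && rle (gpt N j) (a + w))) <=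
  Rmax 0 (Rmin (gpt N K) (a + w + 2 / INR N) - a).
Proof.
  intros HN Hw. assert (Hh : 0 < 2 / INR N) by (apply Rdiv_lt_0_compat; [lra| apply INR_pos; auto]).
  induction K.
  - simpl. rewrite Rmult_0_r. apply Rmax_l.
  - simpl sumN. rewrite Rmult_plus_distr_l, gpt_S.
    set (x := gpt N K) in *. set (h := 2 / INR N) in *.
    destruct (rle a x) eqn:E1; destruct (rle x (a + w)) eqn:E2; simpl ind;
      try apply rle_true in E1; try apply rle_true in E2;
      try apply rle_false in E1; try apply rle_false in E2;
      revert IHK; unfold Rmax, Rmin; repeat destruct Rle_dec; intros; lra.
Qed.

Lemma grid_count_upper N a w : (1 <= N)%nat -> 0 <= w ->
  2 / INR N * sumN N (fun j => ind (rle a (gpt N j) && rle (gpt N j) (a + w))) <= w + 2 / INR N.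
Proof.
  intros HN Hw. eapply Rle_trans. apply grid_count_upper_aux; auto.
  assert (Hh : 0 < 2 / INR N) by (apply Rdiv_lt_0_compat; [lra| apply INR_pos; auto]).
  unfold Rmax, Rmin; repeat destruct Rle_dec; lra.
Qed.

Lemma grid_count_lower_aux N a b : (1 <= N)%nat -> -1 <= a -> forall K,
  Rmin (gpt N K) b - a - 2 * (2 / INR N) <=
  2 / INR N * sumN K (fun j => ind (rle a (gpt N j) && rle (gpt N j) b)).
Proof.
  intros HN Ha. assert (Hh : 0 < 2 / INR N) by (apply Rdiv_lt_0_compat; [lra| apply INR_pos; auto]).
  assert (Hg0 : gpt N 0 = -1 + (2 / INR N) / 2) by (rewrite gpt_0 by auto; field; apply not_0_INR; lia).
  induction K.
  - simpl. rewrite Rmult_0_r, Hg0. unfold Rmin; destruct Rle_dec; lra.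
  - simpl sumN. rewrite Rmult_plus_distr_l, gpt_S.
    assert (Hs := sumN_ind_nonneg K (fun j => rle a (gpt N j) && rle (gpt N j) b)).
    assert (Hs' : 0 <= 2 / INR N * sumN K (fun j => ind (rle a (gpt N j) && rle (gpt N j) b)))
      by (apply Rmult_le_pos; lra).
    set (x := gpt N K) in *. set (h := 2 / INR N) in *.
    destruct (rle a x) eqn:E1; destruct (rle x b) eqn:E2; simpl ind;
      try apply rle_true in E1; try apply rle_true in E2;
      try apply rle_false in E1; try apply rle_false in E2;
      revert IHK; unfold Rmin; repeat destruct Rle_dec; intros; lra.
Qed.

Lemma grid_count_lower N a b : (1 <= N)%nat -> -1 <= a -> b <= 1 ->
  b - a - 2 * (2 / INR N) <=
  2 / INR N * sumN N (fun j => ind (rle a (gpt N j) && rle (gpt N j) b)).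
Proof.
  intros HN Ha Hb. eapply Rle_trans. 2: apply grid_count_lower_aux; auto.
  rewrite gpt_N by auto. pose proof (inv_INR_pos N HN).
  unfold Rmin; destruct Rle_dec; lra.
Qed.

Lemma affine_preimage_interval c r u w : c <> 0 -> 0 <= w -> exists a, forall s,
  u <= c * s + r <= u + w -> rle a s && rle s (a + w / Rabs c) = true.
Proof.
  intros Hc Hw. destruct (Rlt_or_le 0 c) as [Hp|Hn].
  - exists ((u - r) / c). intros s [H1 H2]. rewrite Rabs_right by lra.
    apply andb_true_intro; split; apply rle_true.
    + replace s with ((c * s) / c) by (field; lra). apply Rdiv_le_compat_r; lra.
    + replace s with ((c * s) / c) by (field; lra).
      replace ((u - r) / c + w / c) with ((u - r + w) / c) by (field; lra). apply Rdiv_le_compat_r; lra.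
  - exists ((u + w - r) / c). intros s [H1 H2]. rewrite Rabs_left by lra.
    apply andb_true_intro; split; apply rle_true.
    + replace ((u + w - r) / c) with ((r - u - w) / (- c)) by (field; lra).
      replace s with ((- c * s) / (- c)) by (field; lra). apply Rdiv_le_compat_r; lra.
    + replace ((u + w - r) / c + w / - c) with ((r - u) / (- c)) by (field; lra).
      replace s with ((- c * s) / (- c)) by (field; lra). apply Rdiv_le_compat_r; lra.
Qed.

(* The set ||c s + r| - 1| <= d consists of two intervals of length 2 d / |c|. *)
Lemma grid_slab_1d_le N c r d : (1 <= N)%nat -> c <> 0 -> 0 <= d ->
  2 / INR N * sumN N (fun j => ind (rle (Rabs (Rabs (c * gpt N j + r) - 1)) d)) <=
  2 * (2 * d / Rabs c + 2 / INR N).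
Proof.
  intros HN Hc Hd.
  destruct (affine_preimage_interval c r (1 - d) (2 * d) Hc ltac:(lra)) as [a1 Ha1].
  destruct (affine_preimage_interval c r (-1 - d) (2 * d) Hc ltac:(lra)) as [a2 Ha2].
  assert (Hca : 0 < Rabs c) by (apply Rabs_pos_lt; auto).
  assert (Hw : 0 <= 2 * d / Rabs c) by (apply Rmult_le_pos; [lra| left; apply Rinv_0_lt_compat; auto]).
  pose proof (grid_count_upper N a1 _ HN Hw) as C1. pose proof (grid_count_upper N a2 _ HN Hw) as C2.
  assert (Hh : 0 < 2 / INR N) by (apply Rdiv_lt_0_compat; [lra| apply INR_pos; auto]).
  eapply Rle_trans. 2: { rewrite <- Rplus_diag. apply Rplus_le_compat; [apply C1|apply C2]. }
  rewrite <- Rmult_plus_distr_l, <- sumN_plus. apply Rmult_le_compat_l; [lra|].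
  apply sumN_le. intros j Hj. set (s := gpt N j).
  pose proof (ind_bounds (rle a1 s && rle s (a1 + 2 * d / Rabs c))).
  pose proof (ind_bounds (rle a2 s && rle s (a2 + 2 * d / Rabs c))).
  destruct (rle (Rabs (Rabs (c * s + r) - 1)) d) eqn:E; simpl ind; [|lra].
  apply rle_true, Rabs_le_bounds in E.
  destruct (Rle_or_lt 0 (c * s + r)) as [Hp|Hn].
  - rewrite Rabs_right in E by lra. rewrite (Ha1 s) by lra. simpl. lra.
  - rewrite Rabs_left in E by lra. rewrite (Ha2 s) by lra. simpl. lra.
Qed.

Definition lin (m : nat) (c : nat -> R) (t : nat -> R) : R := sumR1 m (fun k => c k * t k).
Definition sumabs (m : nat) (c : nat -> R) : R := sumR1 m (fun k => Rabs (c k)).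
Definition coef_dist (m : nat) (c c' : nat -> R) : R := sumR1 m (fun k => Rabs (c k - c' k)).
Definition slab (m : nat) (c : nat -> R) (d : R) (t : nat -> R) : R :=
  ind (rle (Rabs (Rabs (lin m c t) - 1)) d).

Lemma sumabs_nonneg m c : 0 <= sumabs m c.
Proof. apply sumR1_nonneg; intros; apply Rabs_pos. Qed.

Lemma coef_dist_nonneg m c c' : 0 <= coef_dist m c c'.
Proof. apply sumR1_nonneg; intros; apply Rabs_pos. Qed.

Lemma coef_dist_self m c : coef_dist m c c = 0.
Proof.
  apply sumR1_eq0; intros. unfold Rminus; rewrite Rplus_opp_r, Rabs_R0; auto.
Qed.

Lemma sumabs_le_dist m c c' : sumabs m c <= sumabs m c' + coef_dist m c c'.
Proof.
  unfold sumabs, coef_dist. rewrite <- sumR1_plus. apply sumR1_le. intros k Hk.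
  pose proof (Rabs_triang (c' k) (c k - c' k)). replace (c' k + (c k - c' k)) with (c k) in H by ring. lra.
Qed.

Lemma lin_bound m c t r : (forall k, (1 <= k <= m)%nat -> Rabs (t k) <= r) ->
  Rabs (lin m c t) <= sumabs m c * r.
Proof.
  intros H. unfold lin, sumabs. eapply Rle_trans. apply sumR1_abs.
  rewrite Rmult_comm, <- sumR1_scal. apply sumR1_le. intros k Hk. rewrite Rabs_mult, Rmult_comm.
  apply Rmult_le_compat_r; auto. apply Rabs_pos.
Qed.

Lemma lin_bound1 m c t : (forall k, (1 <= k <= m)%nat -> Rabs (t k) <= 1) ->
  Rabs (lin m c t) <= sumabs m c.
Proof. intros H. rewrite <- (Rmult_1_r (sumabs m c)). apply lin_bound; auto. Qed.

Lemma lin_diff m c s t d : (forall k, (1 <= k <= m)%nat -> Rabs (s k - t k) <= d) ->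
  Rabs (lin m c s - lin m c t) <= sumabs m c * d.
Proof.
  intros H. replace (lin m c s - lin m c t) with (lin m c (fun k => s k - t k)).
  - apply lin_bound; auto.
  - unfold lin. rewrite <- sumR1_minus. apply sumR1_ext; intros; ring.
Qed.

Lemma lin_coef_diff m c c' t : (forall k, (1 <= k <= m)%nat -> Rabs (t k) <= 1) ->
  Rabs (lin m c t - lin m c' t) <= coef_dist m c c'.
Proof.
  intros H. unfold lin. rewrite <- sumR1_minus. eapply Rle_trans. apply sumR1_abs.
  apply sumR1_le. intros k Hk. replace (c k * t k - c' k * t k) with ((c k - c' k) * t k) by ring.
  rewrite Rabs_mult. specialize (H k Hk). pose proof (Rabs_pos (c k - c' k)).
  pose proof (Rabs_pos (t k)). nra.
Qed.

Lemma lin_upd1 m c t s : (1 <= m)%nat -> lin m c (upd t 1 s) = c 1%nat * s + lin m c (upd t 1 0).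
Proof.
  intros Hm. induction m; [lia|]. destruct m.
  - unfold lin; simpl. rewrite !upd_eq. ring.
  - unfold lin in *. change (sumR1 (S (S m)) ?f) with (sumR1 (S m) f + f (S (S m))).
    rewrite IHm by lia. rewrite !upd_neq by lia. ring.
Qed.

Lemma lin_split1 m c t : (1 <= m)%nat -> lin m c t = c 1%nat * t 1%nat + lin m c (upd t 1 0).
Proof. intros Hm. rewrite <- (lin_upd1 m c t (t 1%nat) Hm), upd_same. auto. Qed.

Lemma riemann_sum_slice_le m : forall f N B, (1 <= N)%nat ->
  (forall t, 2 / INR N * sumN N (fun j => f (upd t 1 (gpt N j))) <= B) ->
  riemann_sum (S m) N f <= 2 ^ m * B.
Proof.
  induction m; intros f N B HN H.
  - unfold riemann_sum; simpl. rewrite Rmult_1_r, Rmult_1_l. apply H.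
  - rewrite riemann_sum_S. assert (Hn : 0 < INR N) by (apply INR_pos; auto).
    apply Rle_trans with (2 / INR N * sumN N (fun _ => 2 ^ m * B)).
    + apply Rmult_le_compat_l. pose proof (inv_INR_pos N HN); unfold Rdiv; lra.
      apply sumN_le. intros j Hj. apply IHm; auto. intros t.
      rewrite (sumN_ext N _ (fun i => f (upd (upd t (S (S m)) (gpt N j)) 1 (gpt N i)))). apply H.
      intros i Hi. rewrite upd_comm by lia. auto.
    + rewrite sumN_const. simpl. right; field; lra.
Qed.

Lemma slab_riemann_sum_le m c d N : c 1%nat <> 0 -> 0 <= d -> (1 <= N)%nat ->
  riemann_sum (S m) N (slab (S m) c d) <= 2 ^ m * (2 * (2 * d / Rabs (c 1%nat) + 2 / INR N)).
Proof.
  intros Hc Hd HN. apply riemann_sum_slice_le; auto. intros t.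
  rewrite (sumN_ext N _ (fun j => ind (rle (Rabs (Rabs (c 1%nat * gpt N j + lin (S m) c (upd t 1 0)) - 1)) d))).
  - apply grid_slab_1d_le; auto.
  - intros j Hj. unfold slab. rewrite lin_upd1 by lia. auto.
Qed.

Lemma slab_riemann_sum_empty m c d N : 0 <= d < 1 - sumabs m c -> (1 <= N)%nat ->
  riemann_sum m N (slab m c d) <= 0.
Proof.
  intros Hd HN. replace 0 with (riemann_sum m N (fun _ => 0)) by (rewrite riemann_sum_const; auto; ring).
  apply riemann_sum_le; auto. intros t Ht. unfold slab.
  assert (Rabs (lin m c t) <= sumabs m c) by (apply lin_bound1, (in_shrunk_cube_le1 N); auto).
  destruct (rle _ d) eqn:E; simpl; [|lra]. apply rle_true, Rabs_le_bounds in E.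
  pose proof (Rabs_pos (lin m c t)). lra.
Qed.

(* Admissible coefficients are those for which the slabs around |<c, t>| = 1 are thin. *)
Definition admissible (m : nat) (c : nat -> R) : Prop := c 1%nat <> 0 \/ sumabs m c < 1.

Lemma slab_riemann_sum_linear m c : (1 <= m)%nat -> admissible m c -> exists C dc, 0 <= C /\ 0 < dc /\
  forall d N, 0 <= d <= dc -> (1 <= N)%nat -> riemann_sum m N (slab m c d) <= C * (d + / INR N).
Proof.
  intros Hm [Hc|Hs].
  - destruct m as [|m]; [lia|].
    assert (Hca : 0 < / Rabs (c 1%nat)) by (apply Rinv_0_lt_compat, Rabs_pos_lt; auto).
    assert (H2 : 0 < 2 ^ m) by (apply pow_lt; lra).
    exists (2 ^ m * 4 * (/ Rabs (c 1%nat) + 1)), 1. split; [nra|]. split; [lra|].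
    intros d N Hd HN. eapply Rle_trans. apply slab_riemann_sum_le; auto; lra.
    pose proof (inv_INR_pos N HN).
    unfold Rdiv. rewrite !Rmult_assoc. apply Rmult_le_compat_l; [lra|].
    assert (0 <= d * / Rabs (c 1%nat)) by (apply Rmult_le_pos; lra). nra.
  - exists 0, ((1 - sumabs m c) / 2). split; [lra|]. split; [lra|].
    intros d N Hd HN. rewrite Rmult_0_l. apply slab_riemann_sum_empty; auto. lra.
Qed.

(* The integrand common to psi and A: the cube cut by |<c1,t>| <= 1 and |<c2,t>| <= 1,
   weighted by <p1,t>^2 + <p2,t>^2. *)
Definition cut_quad (m : nat) (c1 c2 p1 p2 : nat -> R) (t : nat -> R) : R :=
  if box_ok m t && (rle (Rabs (lin m c1 t)) 1 && rle (Rabs (lin m c2 t)) 1)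
  then lin m p1 t ^ 2 + lin m p2 t ^ 2 else 0.

Lemma cut_quad_nonneg m c1 c2 p1 p2 t : 0 <= cut_quad m c1 c2 p1 p2 t.
Proof. unfold cut_quad. destruct (_ && _); [nra| lra]. Qed.

Lemma box_ok_true m t : (forall k, (1 <= k <= m)%nat -> Rabs (t k) <= 1) -> box_ok m t = true.
Proof.
  induction m; simpl; intros H; auto. rewrite IHm by (intros; apply H; lia).
  apply rle_true. apply H; lia.
Qed.

Lemma sum_sq_diff_le a1 a2 b1 b2 d1 d2 K1 K2 :
  Rabs (a1 - b1) <= d1 -> Rabs (a2 - b2) <= d2 ->
  Rabs a1 <= K1 -> Rabs b1 <= K1 -> Rabs a2 <= K2 -> Rabs b2 <= K2 ->
  Rabs ((a1 ^ 2 + a2 ^ 2) - (b1 ^ 2 + b2 ^ 2)) <= 2 * K1 * d1 + 2 * K2 * d2.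
Proof.
  intros H1 H2 Ha1 Hb1 Ha2 Hb2.
  assert (Sq : forall a b d K, Rabs (a - b) <= d -> Rabs a <= K -> Rabs b <= K ->
                 Rabs (a ^ 2 - b ^ 2) <= 2 * K * d).
  { intros a b d K Hd Ha Hb. replace (a ^ 2 - b ^ 2) with ((a - b) * (a + b)) by ring.
    rewrite Rabs_mult. assert (Rabs (a + b) <= 2 * K) by (eapply Rle_trans; [apply Rabs_triang| lra]).
    pose proof (Rabs_pos (a - b)). pose proof (Rabs_pos (a + b)).
    replace (2 * K * d) with (d * (2 * K)) by ring. apply Rmult_le_compat; auto. }
  replace ((a1 ^ 2 + a2 ^ 2) - (b1 ^ 2 + b2 ^ 2)) with ((a1 ^ 2 - b1 ^ 2) + (a2 ^ 2 - b2 ^ 2)) by ring.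
  eapply Rle_trans; [apply Rabs_triang|]. apply Rplus_le_compat; apply Sq; auto.
Qed.

Lemma sum_sq_bound a1 a2 K1 K2 : Rabs a1 <= K1 -> Rabs a2 <= K2 ->
  0 <= a1 ^ 2 + a2 ^ 2 <= K1 ^ 2 + K2 ^ 2.
Proof. intros H1 H2. apply Rabs_le_bounds in H1, H2. split; nra. Qed.

Lemma rle_abs1_eq_or_slab a b d : Rabs (a - b) <= d ->
  rle (Rabs a) 1 = rle (Rabs b) 1 \/ ind (rle (Rabs (Rabs b - 1)) d) = 1.
Proof.
  intros H. destruct (Bool.bool_dec (rle (Rabs a) 1) (rle (Rabs b) 1)) as [e|ne]; [left; auto|right].
  enough (rle (Rabs (Rabs b - 1)) d = true) as -> by auto.
  apply rle_true. pose proof (Rabs_triang_inv a b). pose proof (Rabs_triang_inv b a).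
  rewrite Rabs_minus_sym in H1.
  destruct (rle (Rabs a) 1) eqn:E1, (rle (Rabs b) 1) eqn:E2; try congruence;
  try apply rle_true in E1; try apply rle_true in E2; try apply rle_false in E1; try apply rle_false in E2;
  apply Rabs_le; lra.
Qed.

Lemma truncated_diff_le (bs1 bs2 bt1 bt2 : bool) P Q Bd E i1 i2 :
  0 <= P <= Bd -> 0 <= Q <= Bd -> Rabs (P - Q) <= E -> 0 <= i1 -> 0 <= i2 ->
  (bs1 = bt1 \/ i1 = 1) -> (bs2 = bt2 \/ i2 = 1) ->
  Rabs ((if bs1 && bs2 then P else 0) - (if bt1 && bt2 then Q else 0)) <= E + Bd * (i1 + i2).
Proof.
  intros HP HQ HE Hi1 Hi2 H1 H2. apply Rabs_le_bounds in HE.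
  destruct bs1, bs2, bt1, bt2; simpl;
  destruct H1 as [H1|H1]; try discriminate; destruct H2 as [H2|H2]; try discriminate;
  try subst i1; try subst i2; apply Rabs_le; nra.
Qed.

Lemma cut_quad_diff_le m c1 c2 p1 p2 c1' c2' p1' p2' s t d1 d2 e1 e2 K1 K2 :
  (forall k, (1 <= k <= m)%nat -> Rabs (s k) <= 1) ->
  (forall k, (1 <= k <= m)%nat -> Rabs (t k) <= 1) ->
  Rabs (lin m c1 s - lin m c1' t) <= d1 -> Rabs (lin m c2 s - lin m c2' t) <= d2 ->
  Rabs (lin m p1 s - lin m p1' t) <= e1 -> Rabs (lin m p2 s - lin m p2' t) <= e2 ->
  Rabs (lin m p1 s) <= K1 -> Rabs (lin m p1' t) <= K1 ->
  Rabs (lin m p2 s) <= K2 -> Rabs (lin m p2' t) <= K2 ->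
  Rabs (cut_quad m c1 c2 p1 p2 s - cut_quad m c1' c2' p1' p2' t) <=
  (2 * K1 * e1 + 2 * K2 * e2) + (K1 ^ 2 + K2 ^ 2) * (slab m c1' d1 t + slab m c2' d2 t).
Proof.
  intros Bs Bt Hd1 Hd2 He1 He2 a1 a1' a2 a2'.
  unfold cut_quad, slab. rewrite (box_ok_true m s Bs), (box_ok_true m t Bt). simpl andb.
  apply truncated_diff_le; try apply ind_bounds; try apply rle_abs1_eq_or_slab; auto.
  - apply sum_sq_bound; auto.
  - apply sum_sq_bound; auto.
  - apply sum_sq_diff_le; auto.
Qed.

Definition cut_quad_osc (m : nat) (c1 c2 p1 p2 : nat -> R) (N : nat) (t : nat -> R) : R :=
  let Bd := sumabs m p1 ^ 2 + sumabs m p2 ^ 2 in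
  2 * Bd / INR N + Bd * (slab m c1 (sumabs m c1 / INR N) t + slab m c2 (sumabs m c2 / INR N) t).

Lemma cut_quad_oscillation m c1 c2 p1 p2 N t s : (1 <= N)%nat -> in_shrunk_cube N m t ->
  grid_near N m t s -> Rabs (cut_quad m c1 c2 p1 p2 s - cut_quad m c1 c2 p1 p2 t) <= cut_quad_osc m c1 c2 p1 p2 N t.
Proof.
  intros HN Ht [Hs1 Hs2].
  assert (Bt : forall k, (1 <= k <= m)%nat -> Rabs (t k) <= 1) by (apply in_shrunk_cube_le1 with N; auto).
  assert (Bs : forall k, (1 <= k <= m)%nat -> Rabs (s k) <= 1).
  { intros k Hk. specialize (Ht k Hk). specialize (Hs1 k Hk).
    pose proof (Rabs_triang (s k - t k) (t k)). replace (s k - t k + t k) with (s k) in H by ring. lra. }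
  eapply Rle_trans.
  - apply cut_quad_diff_le with (d1 := sumabs m c1 * / INR N) (d2 := sumabs m c2 * / INR N)
      (e1 := sumabs m p1 * / INR N) (e2 := sumabs m p2 * / INR N); auto;
      try (apply lin_diff; auto); apply lin_bound1; auto.
  - unfold cut_quad_osc, Rdiv. right; ring.
Qed.

Lemma cut_quad_osc_riemann_sum_le m c1 c2 p1 p2 C1 e1 C2 e2 N :
  0 <= C1 -> 0 <= C2 -> (1 <= N)%nat ->
  (forall d N, 0 <= d <= e1 -> (1 <= N)%nat -> riemann_sum m N (slab m c1 d) <= C1 * (d + / INR N)) ->
  (forall d N, 0 <= d <= e2 -> (1 <= N)%nat -> riemann_sum m N (slab m c2 d) <= C2 * (d + / INR N)) ->
  sumabs m c1 / INR N <= e1 -> sumabs m c2 / INR N <= e2 ->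
  riemann_sum m N (cut_quad_osc m c1 c2 p1 p2 N) <=
  (2 ^ m * (2 * (sumabs m p1 ^ 2 + sumabs m p2 ^ 2)) + (sumabs m p1 ^ 2 + sumabs m p2 ^ 2) *
    (C1 * (sumabs m c1 + 1) + C2 * (sumabs m c2 + 1))) / INR N.
Proof.
  intros HC1 HC2 HN S1 S2 h1 h2. assert (Hn : 0 < INR N) by (apply INR_pos; auto).
  pose proof (inv_INR_pos N HN).
  set (Bd := sumabs m p1 ^ 2 + sumabs m p2 ^ 2). assert (HB : 0 <= Bd) by (unfold Bd; nra).
  pose proof (sumabs_nonneg m c1). pose proof (sumabs_nonneg m c2).
  unfold cut_quad_osc; cbv zeta. fold Bd.
  replace (riemann_sum m N _) with (riemann_sum m N (fun _ => 2 * Bd / INR N) + Bd *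
    (riemann_sum m N (slab m c1 (sumabs m c1 / INR N)) + riemann_sum m N (slab m c2 (sumabs m c2 / INR N))))
    by (rewrite <- riemann_sum_plus, <- riemann_sum_scal, <- riemann_sum_plus; reflexivity).
  rewrite riemann_sum_const by auto.
  assert (0 <= sumabs m c1 / INR N) by (unfold Rdiv; apply Rmult_le_pos; lra).
  assert (0 <= sumabs m c2 / INR N) by (unfold Rdiv; apply Rmult_le_pos; lra).
  specialize (S1 (sumabs m c1 / INR N) N ltac:(lra) HN).
  specialize (S2 (sumabs m c2 / INR N) N ltac:(lra) HN).
  apply Rle_trans with (2 ^ m * (2 * Bd / INR N) + Bd *
    (C1 * (sumabs m c1 / INR N + / INR N) + C2 * (sumabs m c2 / INR N + / INR N))).
  - apply Rplus_le_compat_l, Rmult_le_compat_l; auto. lra.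
  - right. field. lra.
Qed.

Lemma cut_quad_riemann_cv m c1 c2 p1 p2 : (1 <= m)%nat -> admissible m c1 -> admissible m c2 ->
  Un_cv (fun N => riemann_sum m (S N) (cut_quad m c1 c2 p1 p2)) (box_integral m (cut_quad m c1 c2 p1 p2)).
Proof.
  intros Hm G1 G2. apply box_integral_cauchy.
  destruct (slab_riemann_sum_linear m c1 Hm G1) as [C1 [e1 [HC1 [He1 S1]]]].
  destruct (slab_riemann_sum_linear m c2 Hm G2) as [C2 [e2 [HC2 [He2 S2]]]].
  set (Q := 2 ^ m * (2 * (sumabs m p1 ^ 2 + sumabs m p2 ^ 2)) + (sumabs m p1 ^ 2 + sumabs m p2 ^ 2) *
    (C1 * (sumabs m c1 + 1) + C2 * (sumabs m c2 + 1))).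
  assert (HQ : 0 <= Q).
  { pose proof (sumabs_nonneg m c1). pose proof (sumabs_nonneg m c2).
    assert (0 < 2 ^ m) by (apply pow_lt; lra).
    unfold Q. apply Rplus_le_le_0_compat; [nra|]. apply Rmult_le_pos; nra. }
  set (F := cut_quad m c1 c2 p1 p2).
  assert (Step : forall N M, (1 <= N)%nat -> (1 <= M)%nat -> sumabs m c1 / INR N <= e1 ->
                  sumabs m c2 / INR N <= e2 ->
                  Rabs (riemann_sum m N F - riemann_sum m (N * M) F) <= 3 ^ m * Q / INR N).
  { intros N M HN HM h1 h2. eapply Rle_trans.
    - apply riemann_sum_refine with (w := cut_quad_osc m c1 c2 p1 p2 N); auto.
      intros t s Ht Hs. apply cut_quad_oscillation; auto.
    - unfold Rdiv. rewrite Rmult_assoc. apply Rmult_le_compat_l; [left; apply pow_lt; lra|].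
      apply (cut_quad_osc_riemann_sum_le m c1 c2 p1 p2 C1 e1 C2 e2 N); auto. }
  intros eta Heta.
  destruct (div_INR_S_small _ e1 (sumabs_nonneg m c1) He1) as [N1 T1].
  destruct (div_INR_S_small _ e2 (sumabs_nonneg m c2) He2) as [N2 T2].
  destruct (div_INR_S_small (3 ^ m * Q) (eta / 2)) as [N3 T3]; [apply Rmult_le_pos; auto; apply pow_le; lra| lra|].
  exists (N1 + N2 + N3)%nat. intros N M HN HM.
  pose proof (Step (S N) (S M) ltac:(lia) ltac:(lia) ltac:(left; apply T1; lia) ltac:(left; apply T2; lia)).
  pose proof (Step (S M) (S N) ltac:(lia) ltac:(lia) ltac:(left; apply T1; lia) ltac:(left; apply T2; lia)).
  rewrite Nat.mul_comm in H0.
  specialize (T3 N ltac:(lia)) as T3N. specialize (T3 M ltac:(lia)) as T3M.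
  set (u := riemann_sum m (S N * S M) F) in *.
  replace (riemann_sum m (S N) F - riemann_sum m (S M) F) with
    ((riemann_sum m (S N) F - u) - (riemann_sum m (S M) F - u)) by ring.
  eapply Rle_trans. apply Rabs_triang. rewrite Rabs_Ropp. lra.
Qed.

Lemma cut_quad_integral_coef_diff m c1 c2 p1 p2 c1' c2' p1' p2' C1 e1 C2 e2 :
  (1 <= m)%nat -> admissible m c1 -> admissible m c2 -> admissible m c1' -> admissible m c2' ->
  0 <= C1 -> 0 <= C2 ->
  (forall d N, 0 <= d <= e1 -> (1 <= N)%nat -> riemann_sum m N (slab m c1' d) <= C1 * (d + / INR N)) ->
  (forall d N, 0 <= d <= e2 -> (1 <= N)%nat -> riemann_sum m N (slab m c2' d) <= C2 * (d + / INR N)) ->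
  coef_dist m c1 c1' <= e1 -> coef_dist m c2 c2' <= e2 ->
  let K1 := sumabs m p1' + coef_dist m p1 p1' in let K2 := sumabs m p2' + coef_dist m p2 p2' in
  Rabs (box_integral m (cut_quad m c1 c2 p1 p2) - box_integral m (cut_quad m c1' c2' p1' p2')) <=
  2 ^ m * (2 * K1 * coef_dist m p1 p1' + 2 * K2 * coef_dist m p2 p2') +
  (K1 ^ 2 + K2 ^ 2) * (C1 * coef_dist m c1 c1' + C2 * coef_dist m c2 c2').
Proof.
  intros Hm G1 G2 G1' G2' HC1 HC2 S1 S2 h1 h2 K1 K2.
  pose proof (coef_dist_nonneg m p1 p1'). pose proof (coef_dist_nonneg m p2 p2').
  pose proof (coef_dist_nonneg m c1 c1'). pose proof (coef_dist_nonneg m c2 c2').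
  assert (HB : 0 <= K1 ^ 2 + K2 ^ 2) by nra.
  apply Un_cv_diff_le with (fun N => riemann_sum m (S N) (cut_quad m c1 c2 p1 p2))
    (fun N => riemann_sum m (S N) (cut_quad m c1' c2' p1' p2')) ((K1 ^ 2 + K2 ^ 2) * (C1 + C2));
    try apply cut_quad_riemann_cv; auto; [nra|].
  exists O. intros N _. pose proof (inv_INR_pos (S N) ltac:(lia)).
  eapply Rle_trans. apply riemann_sum_abs_diff; lia.
  eapply Rle_trans. apply riemann_sum_le with
    (g := fun t => (2 * K1 * coef_dist m p1 p1' + 2 * K2 * coef_dist m p2 p2') + (K1 ^ 2 + K2 ^ 2) *
     (slab m c1' (coef_dist m c1 c1') t + slab m c2' (coef_dist m c2 c2') t)); [lia|].
  { intros t Ht. assert (Bt := in_shrunk_cube_le1 (S N) m t ltac:(lia) Ht).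
    assert (a1 := lin_bound1 m p1' t Bt). assert (a2 := lin_bound1 m p2' t Bt).
    assert (e1' := lin_coef_diff m p1 p1' t Bt). assert (e2' := lin_coef_diff m p2 p2' t Bt).
    apply cut_quad_diff_le; auto; try apply lin_coef_diff; auto;
      try (unfold K1; lra); try (unfold K2; lra).
    - pose proof (Rabs_triang_inv (lin m p1 t) (lin m p1' t)). unfold K1; lra.
    - pose proof (Rabs_triang_inv (lin m p2 t) (lin m p2' t)). unfold K2; lra. }
  replace (riemann_sum m (S N) _) with
    (riemann_sum m (S N) (fun _ => 2 * K1 * coef_dist m p1 p1' + 2 * K2 * coef_dist m p2 p2') +
     (K1 ^ 2 + K2 ^ 2) * (riemann_sum m (S N) (slab m c1' (coef_dist m c1 c1')) +
                          riemann_sum m (S N) (slab m c2' (coef_dist m c2 c2'))))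
    by (rewrite <- riemann_sum_plus, <- riemann_sum_scal, <- riemann_sum_plus; reflexivity).
  rewrite riemann_sum_const by lia.
  specialize (S1 (coef_dist m c1 c1') (S N) ltac:(lra) ltac:(lia)).
  specialize (S2 (coef_dist m c2 c2') (S N) ltac:(lra) ltac:(lia)).
  apply Rle_trans with (2 ^ m * (2 * K1 * coef_dist m p1 p1' + 2 * K2 * coef_dist m p2 p2') +
    (K1 ^ 2 + K2 ^ 2) * (C1 * (coef_dist m c1 c1' + / INR (S N)) + C2 * (coef_dist m c2 c2' + / INR (S N)))).
  - apply Rplus_le_compat_l, Rmult_le_compat_l; auto. lra.
  - right. unfold Rdiv. ring.
Qed.

(* (x0 + i y)^k = Rk + i y Jk; Mk is defined so that k Rk - x0 Jk = y^2 Mk (Mk_spec). *)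
Fixpoint pow_parts (x0 y : R) (k : nat) : R * R :=
  match k with
  | O => (1, 0)
  | S k' => let p := pow_parts x0 y k' in (x0 * fst p - y ^ 2 * snd p, x0 * snd p + fst p)
  end.
Definition Rk (x0 y : R) (k : nat) : R := fst (pow_parts x0 y k).
Definition Jk (x0 y : R) (k : nat) : R := snd (pow_parts x0 y k).
Fixpoint Mk (x0 y : R) (k : nat) : R :=
  match k with O => 0 | S k' => x0 * Mk x0 y k' - INR (S k') * Jk x0 y k' end.

Lemma Rk_S x0 y k : Rk x0 y (S k) = x0 * Rk x0 y k - y ^ 2 * Jk x0 y k.
Proof. reflexivity. Qed.

Lemma Jk_S x0 y k : Jk x0 y (S k) = x0 * Jk x0 y k + Rk x0 y k.
Proof. reflexivity. Qed.

Lemma cpow_parts x0 y k : cpow (x0, y) k = (Rk x0 y k, y * Jk x0 y k).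
Proof.
  induction k; simpl. unfold Rk, Jk; simpl. f_equal; ring.
  rewrite IHk. unfold cmul; simpl. rewrite Rk_S, Jk_S. f_equal; ring.
Qed.

Lemma Mk_spec x0 y k : INR k * Rk x0 y k - x0 * Jk x0 y k = y ^ 2 * Mk x0 y k.
Proof.
  induction k. unfold Rk, Jk; simpl; ring.
  replace (y ^ 2 * Mk x0 y (S k)) with (x0 * (y ^ 2 * Mk x0 y k) - INR (S k) * y ^ 2 * Jk x0 y k)
    by (cbn [Mk]; ring).
  rewrite <- IHk, Rk_S, Jk_S, S_INR. ring.
Qed.

Lemma Rk_0 x0 k : Rk x0 0 k = x0 ^ k.
Proof. induction k. reflexivity. rewrite Rk_S, IHk. simpl; ring. Qed.

Lemma Jk_0 x0 k : Jk x0 0 k = INR k * x0 ^ (k - 1).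
Proof.
  induction k. unfold Jk; simpl; ring.
  rewrite Jk_S, IHk, Rk_0. destruct k. simpl; ring.
  replace (S (S k) - 1)%nat with (S k) by lia. replace (S k - 1)%nat with k by lia.
  rewrite !S_INR. simpl. ring.
Qed.

Definition cf1 (x0 y : R) (k : nat) : R := x0 * Jk x0 y (S k) - Rk x0 y (S k).
Definition cf2 (x0 y : R) (k : nat) : R := Jk x0 y (S k).
Definition cp1 (x0 y : R) (k : nat) : R := INR (S k) * Jk x0 y k.
Definition cp2 (x0 y : R) (k : nat) : R := y * Mk x0 y k.

Lemma cf1_0 x0 k : cf1 x0 0 k = INR k * x0 ^ S k.
Proof. unfold cf1. rewrite Rk_0, Jk_0. replace (S k - 1)%nat with k by lia. rewrite S_INR; simpl; ring. Qed.

Lemma cf2_0 x0 k : cf2 x0 0 k = INR (S k) * x0 ^ k.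
Proof. unfold cf2. rewrite Jk_0. replace (S k - 1)%nat with k by lia. ring. Qed.

Lemma cp1_0 x0 k : cp1 x0 0 k = INR k * INR (S k) * x0 ^ (k - 1).
Proof. unfold cp1. rewrite Jk_0. ring. Qed.

Lemma sumC1_eq m g : sumC1 m g = (sumR1 m (fun k => fst (g k)), sumR1 m (fun k => snd (g k))).
Proof. induction m; simpl; auto. rewrite IHm. unfold cadd; simpl; auto. Qed.

Lemma cnorm_sq a b : cnorm (a, b) ^ 2 = a ^ 2 + b ^ 2.
Proof. unfold cnorm; simpl fst; simpl snd. apply pow2_sqrt. nra. Qed.

Lemma cnorm_real a : cnorm (a, 0) = Rabs a.
Proof. unfold cnorm; simpl fst; simpl snd. rewrite <- sqrt_Rsqr_abs. f_equal. unfold Rsqr; ring. Qed.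

(* The complex constraint of D_z has vanishing imaginary part. *)
Lemma Dz_ok_eq n x0 y t : y <> 0 ->
  Dz_ok n (x0, y) t = box_ok (n - 1) t &&
     (rle (Rabs (lin (n - 1) (cf1 x0 y) t)) 1 && rle (Rabs (lin (n - 1) (cf2 x0 y) t)) 1).
Proof.
  intros Hy. unfold Dz_ok. cbv zeta. set (m := (n - 1)%nat). f_equal. f_equal.
  - f_equal. rewrite sumC1_eq. unfold cmul. simpl fst. simpl snd.
    set (S1 := sumR1 m _). set (S2 := sumR1 m _).
    assert (H1 : S1 = sumR1 m (fun k => t k * (Rk x0 y k - Jk x0 y (S k)))).
    { unfold S1. apply sumR1_ext; intros k Hk. rewrite !cpow_parts. unfold Im; simpl. rewrite Jk_S. field; auto. }
    assert (H2 : S2 = sumR1 m (fun k => t k * (y * Jk x0 y k))).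
    { unfold S2. apply sumR1_ext; intros k Hk. rewrite !cpow_parts. simpl. ring. }
    assert (E1 : x0 * S1 - y * S2 = - lin m (cf1 x0 y) t).
    { rewrite H1, H2, <- !sumR1_scal, <- sumR1_minus. unfold lin.
      rewrite <- (Rmult_1_l (sumR1 m (fun k => cf1 x0 y k * t k))), Ropp_mult_distr_l, <- sumR1_scal.
      apply sumR1_ext; intros k Hk. unfold cf1. rewrite Rk_S, Jk_S. ring. }
    assert (E2 : x0 * S2 + y * S1 = 0).
    { rewrite H1, H2, <- !sumR1_scal, <- sumR1_plus. apply sumR1_eq0; intros k Hk. rewrite Jk_S. ring. }
    rewrite E1, E2, cnorm_real, Rabs_Ropp. auto.
  - f_equal. unfold lin, cf2. unfold Im at 1. simpl snd. rewrite <- sumR1_scal.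
    f_equal. apply sumR1_ext; intros k Hk. rewrite cpow_parts. unfold Im; simpl. field; auto.
Qed.

Lemma psi_integrand_eq n x0 y t : y <> 0 ->
  psi_integrand n (x0, y) t = y ^ 2 * (lin (n - 1) (cp1 x0 y) t ^ 2 + lin (n - 1) (cp2 x0 y) t ^ 2).
Proof.
  intros Hy. unfold psi_integrand. cbv zeta. set (m := (n - 1)%nat).
  rewrite sumC1_eq, cnorm_sq. unfold cscal, csub, cofR. cbn [fst snd].
  rewrite (sumR1_ext m (fun k => t k * (INR (S k) * snd (cpow (x0, y) k) - 0)) (fun k => y * (cp1 x0 y k * t k))).
  rewrite (sumR1_ext m _ (fun k => y * (cp2 x0 y k * t k))).
  - rewrite !sumR1_scal. unfold lin. ring.
  - intros k Hk. rewrite !cpow_parts. unfold Im; cbn [fst snd].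
    unfold cp2. replace (y * Jk x0 y (S k) / y) with (Jk x0 y (S k)) by (field; auto).
    rewrite Jk_S. replace (INR (S k) * Rk x0 y k - (x0 * Jk x0 y k + Rk x0 y k)) with
      (INR k * Rk x0 y k - x0 * Jk x0 y k) by (rewrite S_INR; ring).
    rewrite Mk_spec. ring.
  - intros k Hk. rewrite !cpow_parts. unfold cp1. cbn [fst snd]. ring.
Qed.

Definition reduced_integral (m : nat) (x0 y : R) : R :=
  box_integral m (cut_quad m (cf1 x0 y) (cf2 x0 y) (cp1 x0 y) (cp2 x0 y)).

Lemma A_const_eq n x0 : A_const n x0 = reduced_integral (n - 1) x0 0.
Proof.
  unfold A_const, reduced_integral. f_equal. apply functional_extensionality; intros t.
  set (m := (n - 1)%nat).
  assert (E1 : lin m (cf1 x0 0) t = sumR1 m (fun k => INR k * t k * x0 ^ S k))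
    by (apply sumR1_ext; intros k _; rewrite cf1_0; ring).
  assert (E2 : lin m (cf2 x0 0) t = sumR1 m (fun k => INR (S k) * t k * x0 ^ k))
    by (apply sumR1_ext; intros k _; rewrite cf2_0; ring).
  assert (E3 : lin m (cp1 x0 0) t = sumR1 m (fun k => INR k * INR (S k) * t k * x0 ^ (k - 1)))
    by (apply sumR1_ext; intros k _; rewrite cp1_0; ring).
  assert (E4 : lin m (cp2 x0 0) t = 0).
  { apply sumR1_eq0; intros k _. unfold cp2; ring. }
  unfold Dtilde_ok, cut_quad. cbv zeta. fold m. rewrite E1, E2, E3, E4.
  destruct (_ && _); auto. rewrite pow2_abs. ring.
Qed.

Lemma box_integral_scal m c f : Un_cv (fun N => riemann_sum m (S N) f) (box_integral m f) ->
  box_integral m (fun t => c * f t) = c * box_integral m f.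
Proof.
  intros H. apply box_integral_unique. eapply Un_cv_ext; [|apply Un_cv_scal, H].
  intros N; simpl. symmetry; apply riemann_sum_scal.
Qed.

Lemma admissible_cf1 m x0 y : y <> 0 -> admissible m (cf1 x0 y).
Proof. intros Hy. left. unfold cf1, Jk, Rk. simpl. intro h. apply Hy. nra. Qed.

Lemma sumabs_cf2_0_0 m : sumabs m (cf2 0 0) = 0.
Proof.
  apply sumR1_eq0; intros k Hk. rewrite cf2_0. destruct k; [lia|]. simpl. rewrite Rmult_0_l, Rmult_0_r, Rabs_R0; auto.
Qed.

Lemma admissible_cf2 m x0 y : coef_dist m (cf2 x0 y) (cf2 x0 0) < 1 -> admissible m (cf2 x0 y).
Proof.
  intros Hd. destruct (Req_dec x0 0) as [->|Hx].
  - right. pose proof (sumabs_le_dist m (cf2 0 y) (cf2 0 0)). rewrite sumabs_cf2_0_0 in H. lra.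
  - left. unfold cf2, Jk. simpl. intro h. apply Hx. lra.
Qed.

Lemma admissible_coef_0 m x0 : admissible m (cf1 x0 0) /\ admissible m (cf2 x0 0).
Proof.
  destruct (Req_dec x0 0) as [->|Hx].
  - split; [|apply admissible_cf2; rewrite coef_dist_self; lra].
    right. unfold sumabs. rewrite sumR1_eq0; [lra|].
    intros k Hk. rewrite cf1_0. simpl. rewrite Rmult_0_l, Rmult_0_r, Rabs_R0; auto.
  - split; left; [rewrite cf1_0 | rewrite cf2_0]; simpl; intro h; apply Hx; nra.
Qed.

Lemma psi_eq n x0 y : (2 <= n)%nat -> y <> 0 -> admissible (n - 1) (cf2 x0 y) ->
  psi n x0 y = Rabs y * reduced_integral (n - 1) x0 y.
Proof.
  intros Hn Hy G2. unfold psi, reduced_integral, Im; simpl snd.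
  replace (fun t => if Dz_ok n (x0, y) t then psi_integrand n (x0, y) t else 0) with
    (fun t => y ^ 2 * cut_quad (n - 1) (cf1 x0 y) (cf2 x0 y) (cp1 x0 y) (cp2 x0 y) t).
  - rewrite box_integral_scal by (apply cut_quad_riemann_cv; auto using admissible_cf1; lia).
    rewrite <- pow2_abs. pose proof (Rabs_pos_lt y Hy). field. lra.
  - apply functional_extensionality; intros t. rewrite Dz_ok_eq, psi_integrand_eq by auto.
    unfold cut_quad. destruct (_ && _); ring.
Qed.

Lemma continuity_pow_parts x0 k : continuity (fun y => Rk x0 y k) /\ continuity (fun y => Jk x0 y k).
Proof.
  induction k as [|k [IH1 IH2]].
  - split; apply continuity_const; intros ? ?; reflexivity.
  - split.
    + apply (continuity_minus (fun y => x0 * Rk x0 y k) (fun y => y ^ 2 * Jk x0 y k)).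
      * apply (continuity_mult (fun _ => x0)); auto. apply continuity_const; intros ? ?; reflexivity.
      * apply (continuity_mult (fun y => y ^ 2)); auto. apply derivable_continuous; reg.
    + apply (continuity_plus (fun y => x0 * Jk x0 y k) (fun y => Rk x0 y k)); auto.
      apply (continuity_mult (fun _ => x0)); auto. apply continuity_const; intros ? ?; reflexivity.
Qed.

Lemma continuity_Mk x0 k : continuity (fun y => Mk x0 y k).
Proof.
  induction k; [apply continuity_const; intros ? ?; reflexivity|].
  apply (continuity_minus (fun y => x0 * Mk x0 y k) (fun y => INR (S k) * Jk x0 y k)).
  - apply (continuity_mult (fun _ => x0)); auto. apply continuity_const; intros ? ?; reflexivity.
  - apply (continuity_mult (fun _ => INR (S k))). apply continuity_const; intros ? ?; reflexivity.
    apply continuity_pow_parts.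
Qed.

Lemma continuity_coef_dist m (c : R -> nat -> R) : (forall k, continuity (fun y => c y k)) ->
  continuity (fun y => coef_dist m (c y) (c 0)).
Proof.
  intros H. unfold coef_dist. induction m; simpl.
  - apply continuity_const; intros ? ?; reflexivity.
  - apply (continuity_plus _ (fun y => Rabs (c y (S m) - c 0 (S m)))); auto.
    apply (continuity_comp (fun y => c y (S m) - c 0 (S m)) Rabs); [|apply Rcontinuity_abs].
    apply (continuity_minus (fun y => c y (S m))); auto. apply continuity_const; intros ? ?; reflexivity.
Qed.

Definition coef_dist_sum (m : nat) (x0 y : R) : R :=
  coef_dist m (cf1 x0 y) (cf1 x0 0) + coef_dist m (cf2 x0 y) (cf2 x0 0) +
  coef_dist m (cp1 x0 y) (cp1 x0 0) + coef_dist m (cp2 x0 y) (cp2 x0 0).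

Lemma coef_dist_sum_small m x0 e : 0 < e ->
  exists d, 0 < d /\ forall y, Rabs y < d -> coef_dist_sum m x0 y < e.
Proof.
  intros He. assert (Hc : continuity (coef_dist_sum m x0)).
  { assert (C := continuity_pow_parts x0). unfold coef_dist_sum.
    repeat apply continuity_plus; apply continuity_coef_dist; intros k; unfold cf1, cf2, cp1, cp2.
    - apply (continuity_minus (fun y => x0 * Jk x0 y (S k))); [|apply C].
      apply (continuity_mult (fun _ => x0)); [apply continuity_const; intros ? ?; reflexivity|apply C].
    - apply C.
    - apply (continuity_mult (fun _ => INR (S k))); [apply continuity_const; intros ? ?; reflexivity|apply C].
    - apply (continuity_mult (fun y => y)); [apply derivable_continuous; reg| apply continuity_Mk]. }
  destruct (Hc 0 e He) as [d [Hd H]]. exists d; split; auto. intros y Hy.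
  destruct (Req_dec y 0) as [->|Hy0].
  - unfold coef_dist_sum. rewrite !coef_dist_self. lra.
  - assert (Hy' : R_dist y 0 < d) by (unfold R_dist; rewrite Rminus_0_r; auto).
    specialize (H y (conj (conj I (not_eq_sym Hy0)) Hy')).
    simpl in H. unfold R_dist, coef_dist_sum at 2 in H. rewrite !coef_dist_self in H.
    apply Rabs_def2 in H. lra.
Qed.

Lemma coef_diff_bound_linear (a P1 P2 C1 C2 d1 d2 q1 q2 : R) :
  0 <= a -> 0 <= P1 -> 0 <= P2 -> 0 <= C1 -> 0 <= C2 ->
  0 <= d1 -> 0 <= d2 -> 0 <= q1 -> 0 <= q2 -> d1 + d2 + q1 + q2 <= 1 ->
  a * (2 * (P1 + q1) * q1 + 2 * (P2 + q2) * q2) + ((P1 + q1) ^ 2 + (P2 + q2) ^ 2) * (C1 * d1 + C2 * d2)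
  <= (a * (2 * (P1 + 1) + 2 * (P2 + 1)) + ((P1 + 1) ^ 2 + (P2 + 1) ^ 2) * (C1 + C2)) * (d1 + d2 + q1 + q2).
Proof.
  intros Ha HP1 HP2 HC1 HC2 Hd1 Hd2 Hq1 Hq2 HD. set (D := d1 + d2 + q1 + q2) in *.
  assert (q1 <= D /\ q2 <= D /\ C1 * d1 + C2 * d2 <= (C1 + C2) * D) as [Hq1D [Hq2D HCD]]
    by (unfold D; repeat split; nra).
  assert (2 * (P1 + q1) * q1 <= 2 * (P1 + 1) * D) by (apply Rmult_le_compat; nra).
  assert (2 * (P2 + q2) * q2 <= 2 * (P2 + 1) * D) by (apply Rmult_le_compat; nra).
  assert ((P1 + q1) ^ 2 + (P2 + q2) ^ 2 <= (P1 + 1) ^ 2 + (P2 + 1) ^ 2) by nra.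
  assert (((P1 + q1) ^ 2 + (P2 + q2) ^ 2) * (C1 * d1 + C2 * d2) <= ((P1 + 1) ^ 2 + (P2 + 1) ^ 2) * ((C1 + C2) * D))
    by (apply Rmult_le_compat; nra).
  assert (a * (2 * (P1 + q1) * q1 + 2 * (P2 + q2) * q2) <= a * ((2 * (P1 + 1) + 2 * (P2 + 1)) * D))
    by (apply Rmult_le_compat_l; lra).
  nra.
Qed.

Lemma reduced_integral_cont_at0 m x0 : (1 <= m)%nat -> forall e, 0 < e ->
  exists delta, 0 < delta /\ forall y, y <> 0 -> Rabs y < delta ->
  admissible m (cf2 x0 y) /\ Rabs (reduced_integral m x0 y - reduced_integral m x0 0) <= e.
Proof.
  intros Hm e He. destruct (admissible_coef_0 m x0) as [G1' G2'].
  destruct (slab_riemann_sum_linear m _ Hm G1') as [C1 [e1 [HC1 [He1 S1]]]].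
  destruct (slab_riemann_sum_linear m _ Hm G2') as [C2 [e2 [HC2 [He2 S2]]]].
  pose proof (sumabs_nonneg m (cp1 x0 0)). pose proof (sumabs_nonneg m (cp2 x0 0)).
  set (P1 := sumabs m (cp1 x0 0)) in *. set (P2 := sumabs m (cp2 x0 0)) in *.
  assert (H2m : 0 < 2 ^ m) by (apply pow_lt; lra).
  set (Lam := 2 ^ m * (2 * (P1 + 1) + 2 * (P2 + 1)) + ((P1 + 1) ^ 2 + (P2 + 1) ^ 2) * (C1 + C2)).
  assert (HLam : 0 <= Lam) by (unfold Lam; apply Rplus_le_le_0_compat; [nra| apply Rmult_le_pos; nra]).
  set (D0 := Rmin (1 / 2) (Rmin e1 (Rmin e2 (e / (Lam + 1))))).
  assert (HD0 : 0 < D0) by (unfold D0; repeat apply Rmin_pos; try lra; apply Rdiv_lt_0_compat; lra).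
  destruct (coef_dist_sum_small m x0 D0 HD0) as [delta [Hdelta Hd]].
  exists delta. split; auto. intros y Hy Hyd. specialize (Hd y Hyd). unfold coef_dist_sum in Hd.
  pose proof (coef_dist_nonneg m (cf1 x0 y) (cf1 x0 0)). pose proof (coef_dist_nonneg m (cf2 x0 y) (cf2 x0 0)).
  pose proof (coef_dist_nonneg m (cp1 x0 y) (cp1 x0 0)). pose proof (coef_dist_nonneg m (cp2 x0 y) (cp2 x0 0)).
  assert (D0a : D0 <= 1 / 2) by apply Rmin_l.
  assert (D0b : D0 <= e1) by (eapply Rle_trans; [apply Rmin_r| apply Rmin_l]).
  assert (D0c : D0 <= e2) by (do 2 (eapply Rle_trans; [apply Rmin_r|]); apply Rmin_l).
  assert (D0d : D0 <= e / (Lam + 1)) by (do 3 (eapply Rle_trans; [apply Rmin_r|]); apply Rle_refl).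
  assert (G2 : admissible m (cf2 x0 y)) by (apply admissible_cf2; lra).
  split; auto.
  eapply Rle_trans.
  { apply (cut_quad_integral_coef_diff m _ _ (cp1 x0 y) (cp2 x0 y) _ _ (cp1 x0 0) (cp2 x0 0) C1 e1 C2 e2);
      auto using admissible_cf1; lra. }
  cbv zeta. fold P1 P2. eapply Rle_trans.
  { apply coef_diff_bound_linear; auto; try lra. }
  fold Lam. apply Rle_trans with (Lam * (e / (Lam + 1))); [apply Rmult_le_compat_l; lra|].
  unfold Rdiv. rewrite <- Rmult_assoc. apply Rmult_le_reg_r with (Lam + 1); [lra|].
  rewrite Rmult_assoc, Rinv_l by lra. nra.
Qed.

Fixpoint prodR1 (m : nat) (g : nat -> R) : R :=
  match m with O => 1 | S m' => prodR1 m' g * g (S m') end.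

Lemma prodR1_ext m g g' : (forall k, (1 <= k <= m)%nat -> g k = g' k) -> prodR1 m g = prodR1 m g'.
Proof. induction m; simpl; intros H; auto. rewrite IHm by (intros; apply H; lia). rewrite H by lia; auto. Qed.

Lemma prodR1_const m c : prodR1 m (fun _ => c) = c ^ m.
Proof. induction m; simpl; auto. rewrite IHm; ring. Qed.

Lemma prodR1_scal m c g : c ^ m * prodR1 m g = prodR1 m (fun k => c * g k).
Proof. induction m; simpl; [ring|]. rewrite <- IHm; ring. Qed.

Lemma prodR1_le m g g' : (forall k, (1 <= k <= m)%nat -> 0 <= g k <= g' k) -> prodR1 m g <= prodR1 m g'.
Proof.
  induction m; simpl; intros H; [lra|].
  assert (0 <= prodR1 m g).
  { clear IHm. induction m; simpl; [lra|].
    apply Rmult_le_pos; [apply IHm; intros; apply H; lia| apply H; lia]. }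
  apply Rmult_le_compat; auto; try (apply H; lia). apply IHm; intros; apply H; lia.
Qed.

Lemma prodR1_ind m (P : nat -> bool) :
  (prodR1 m (fun k => ind (P k)) = 1 /\ forall k, (1 <= k <= m)%nat -> P k = true) \/
  prodR1 m (fun k => ind (P k)) = 0.
Proof.
  induction m; simpl. left; split; auto; intros; lia.
  destruct (P (S m)) eqn:E; simpl; [|right; ring].
  destruct IHm as [[H1 H2]|H]; [left; split|right; rewrite H; ring].
  - rewrite H1; ring.
  - intros k Hk. destruct (Nat.eq_dec k (S m)); [subst; auto| apply H2; lia].
Qed.

Lemma gsum_prod m : forall N (phi : nat -> R -> R),
  gsum m N (fun t => prodR1 m (fun k => phi k (t k))) = prodR1 m (fun k => sumN N (fun j => phi k (gpt N j))).
Proof.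
  induction m; intros N phi; simpl; auto.
  rewrite (sumN_ext N _ (fun j => gsum m N (fun t => prodR1 m (fun k => phi k (t k))) * phi (S m) (gpt N j))).
  - rewrite sumN_scal, IHm. auto.
  - intros j Hj. rewrite Rmult_comm, <- gsum_scal. f_equal.
    apply functional_extensionality; intros t. rewrite upd_eq, Rmult_comm. f_equal.
    apply prodR1_ext. intros k Hk. rewrite upd_neq by lia. auto.
Qed.

Definition box_indicator (m : nat) (a b : nat -> R) (t : nat -> R) : R :=
  prodR1 m (fun k => ind (rle (a k) (t k) && rle (t k) (b k))).

Lemma riemann_sum_box_indicator_ge m N a b r : (1 <= N)%nat -> 8 / INR N <= r ->
  (forall k, (1 <= k <= m)%nat -> -1 <= a k /\ b k <= 1 /\ r <= b k - a k) ->
  (r / 2) ^ m <= riemann_sum m N (box_indicator m a b).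
Proof.
  intros HN Hr Hab. unfold riemann_sum, box_indicator.
  rewrite (gsum_prod m N (fun k s => ind (rle (a k) s && rle s (b k)))), prodR1_scal, <- prodR1_const.
  apply prodR1_le. intros k Hk. destruct (Hab k Hk) as [Ha [Hb Hr']].
  pose proof (grid_count_lower N (a k) (b k) HN Ha Hb). pose proof (inv_INR_pos N HN).
  unfold Rdiv in *. split; lra.
Qed.

Lemma cut_quad_ge_on_box m c1 c2 p1 p2 r r' t : (1 <= m)%nat -> 0 < p1 1%nat ->
  0 <= r' <= r -> r <= 1 -> sumabs m c1 * r <= 1 -> sumabs m c2 * r <= 1 ->
  sumabs m p1 * r' <= p1 1%nat * r / 4 ->
  r / 2 <= t 1%nat <= r -> (forall k, (2 <= k <= m)%nat -> Rabs (t k) <= r') ->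
  (p1 1%nat * r / 4) ^ 2 <= cut_quad m c1 c2 p1 p2 t.
Proof.
  intros Hm Hp Hr Hr1 Hc1 Hc2 HP Ht1 Htk.
  assert (Hall : forall k, (1 <= k <= m)%nat -> Rabs (t k) <= r).
  { intros k Hk. destruct (Nat.eq_dec k 1); [subst; apply Rabs_le; lra|].
    specialize (Htk k ltac:(lia)). lra. }
  assert (Hrest : forall k, (1 <= k <= m)%nat -> Rabs (upd t 1 0 k) <= r').
  { intros k Hk. destruct (Nat.eq_dec k 1); [subst; rewrite upd_eq, Rabs_R0; lra|].
    rewrite upd_neq by auto. apply Htk; lia. }
  pose proof (lin_bound m c1 t r Hall). pose proof (lin_bound m c2 t r Hall).
  pose proof (lin_bound m p1 (upd t 1 0) r' Hrest).
  unfold cut_quad. rewrite box_ok_true by (intros k Hk; specialize (Hall k Hk); lra).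
  rewrite !(proj2 (rle_true _ _)) by lra. simpl andb.
  rewrite (lin_split1 m p1) by auto. apply Rabs_le_bounds in H1.
  assert (p1 1%nat * t 1%nat + lin m p1 (upd t 1 0) >= p1 1%nat * r / 4) by nra.
  assert (0 <= p1 1%nat * r / 4) by (apply Rmult_le_pos; [apply Rmult_le_pos|]; lra).
  assert (E : (p1 1%nat * r / 4) ^ 2 <= (p1 1%nat * t 1%nat + lin m p1 (upd t 1 0)) ^ 2)
    by (apply pow_incr; lra).
  pose proof (pow2_ge_0 (lin m p2 t)). lra.
Qed.

Lemma reduced_integral_0_pos m x0 : (1 <= m)%nat -> 0 < reduced_integral m x0 0.
Proof.
  intros Hm. destruct (admissible_coef_0 m x0) as [G1 G2].
  assert (HI := cut_quad_riemann_cv m _ _ (cp1 x0 0) (cp2 x0 0) Hm G1 G2).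
  set (K1 := sumabs m (cf1 x0 0)). set (K2 := sumabs m (cf2 x0 0)). set (P := sumabs m (cp1 x0 0)).
  assert (HK1 : 0 <= K1) by apply sumabs_nonneg. assert (HK2 : 0 <= K2) by apply sumabs_nonneg.
  assert (HP : 0 <= P) by apply sumabs_nonneg.
  assert (Hc : cp1 x0 0 1%nat = 2) by (rewrite cp1_0; simpl; ring).
  set (r := / (1 + K1 + K2)). set (r' := r / (2 * (1 + P))).
  assert (Er : r * (1 + K1 + K2) = 1) by (unfold r; field; lra).
  assert (Er' : r' * (2 * (1 + P)) = r) by (unfold r'; field; lra).
  assert (Hr : 0 < r) by (unfold r; apply Rinv_0_lt_compat; lra).
  assert (Hr' : 0 < r') by (unfold r'; apply Rdiv_lt_0_compat; lra).
  set (a := fun k => if Nat.eqb k 1 then r / 2 else - r').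
  set (b := fun k => if Nat.eqb k 1 then r else r').
  assert (Pt : forall t, (2 * r / 4) ^ 2 * box_indicator m a b t <=
                          cut_quad m (cf1 x0 0) (cf2 x0 0) (cp1 x0 0) (cp2 x0 0) t).
  { intros t. unfold box_indicator.
    destruct (prodR1_ind m (fun k => rle (a k) (t k) && rle (t k) (b k))) as [[-> Hall] | ->].
    2: { rewrite Rmult_0_r. apply cut_quad_nonneg. }
    assert (Hk : forall k, (1 <= k <= m)%nat -> a k <= t k <= b k).
    { intros k Hk. destruct (andb_prop _ _ (Hall k Hk)) as [h1 h2]. apply rle_true in h1, h2; auto. }
    rewrite Rmult_1_r. replace (2 * r / 4) with (cp1 x0 0 1%nat * r / 4) by (rewrite Hc; ring).
    apply cut_quad_ge_on_box with (r' := r'); auto; fold K1 K2 P; rewrite ?Hc; try nra.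
    - specialize (Hk 1%nat ltac:(lia)). unfold a, b in Hk. simpl in Hk. lra.
    - intros k Hk'. specialize (Hk k ltac:(lia)). unfold a, b in Hk.
      destruct (Nat.eqb_spec k 1); [lia|]. apply Rabs_le; lra. }
  apply Rlt_le_trans with ((2 * r / 4) ^ 2 * (r' / 2) ^ m).
  { apply Rmult_lt_0_compat; apply pow_lt; lra. }
  apply Un_cv_ge with (1 := HI).
  destruct (div_INR_S_small 8 r' ltac:(lra) Hr') as [N0 HN0]. exists N0. intros N HN.
  eapply Rle_trans; [|apply riemann_sum_le with (f := fun t => (2 * r / 4) ^ 2 * box_indicator m a b t); auto; lia].
  rewrite riemann_sum_scal. apply Rmult_le_compat_l; [apply pow_le; lra|].
  apply riemann_sum_box_indicator_ge; [lia| left; apply HN0; auto|].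
  intros k Hk. unfold a, b. destruct (Nat.eqb k 1); nra.
Qed.

Theorem proposition2 (n : nat) (x0 : R) :
  (2 <= n)%nat ->
  forall eps : R, 0 < eps ->
  exists delta : R, 0 < delta /\
    forall y : R, y <> 0 -> Rabs y < delta ->
      Rabs (psi n x0 y - A_const n x0 * Rabs y) <= eps * (A_const n x0 * Rabs y).
Proof.
  intros Hn eps Heps. rewrite A_const_eq.
  assert (Hm : (1 <= n - 1)%nat) by lia.
  pose proof (reduced_integral_0_pos (n - 1) x0 Hm) as HA.
  destruct (reduced_integral_cont_at0 (n - 1) x0 Hm (eps * reduced_integral (n - 1) x0 0))
    as [delta [Hdelta Hclose]]; [nra|].
  exists delta. split; auto. intros y Hy Hyd.
  destruct (Hclose y Hy Hyd) as [G2 Hd].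
  rewrite psi_eq by auto.
  replace (Rabs y * reduced_integral (n - 1) x0 y - reduced_integral (n - 1) x0 0 * Rabs y) with
    (Rabs y * (reduced_integral (n - 1) x0 y - reduced_integral (n - 1) x0 0)) by ring.
  rewrite Rabs_mult, Rabs_Rabsolu.
  replace (eps * (reduced_integral (n - 1) x0 0 * Rabs y)) with
    (Rabs y * (eps * reduced_integral (n - 1) x0 0)) by ring.
  apply Rmult_le_compat_l; auto. apply Rabs_pos.
Qed.
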